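(* Let $\mathbf{B}$ be a Mal'cev algebra on a three-element set. Then $\mathbf{B}$ is isomorphic to an algebra $\mathbf{A}$ on $\{0,1,2\}$ with monolith $\mu$ such that one of the following holds: (1) $\mu=1_A$ and every binary relation $R\leq\mathbf{A}^2$ (i.e., $R\in\mathrm{Inv}(\mathbf{A})$, $R\subseteq A^2$) is pp-definable from the unary invariant relations of $\mathbf{A}$ together with $\{\varphi,\psi_2,\psi_0',\psi_1',\psi_2',\varphi_0',\ldots,\varphi_5'\}\cap\mathrm{Inv}(\mathbf{A})$; (2) $\mu=\mu_2$ and every binary relation $R\leq\mathbf{A}^2$ is pp-definable from the unary invariant relations of $\mathbf{A}$ together with $\{\mu_2,\rho_2,\tau_0,\tau_1,\psi_2,\psi_2'\}\cap\mathrm{Inv}(\mathbf{A})$.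
   Context: A Mal'cev algebra has a term $d$ with $d(y,x,x)\approx d(x,x,y)\approx y$. $\mathrm{Inv}(\mathbf{A})$ is the set of relations preserved by all operations of $\mathbf{A}$. The monolith is the least congruence strictly above the equality relation $0_A$ (equal to $1_A=A^2$ if $\mathbf{A}$ is simple). A relation is pp-definable from a set of relations if it is definable by a first-order formula using only those relations, equality, conjunction and existential quantification. Relations on $\{0,1,2\}$: $\mu_i$ is the equivalence relation with classes $\{i\}$ and $\{0,1,2\}\setminus\{i\}$; $\rho_i=\{0,1,2\}^2\setminus\mu_i$; $\psi_i$ is the graph of the transposition fixing $i$ and $\psi_i'$ its restriction to $\{0,1,2\}\setminus\{i\}$ (e.g. $\psi_2=\{(0,1),(1,0),(2,2)\}$, $\psi_2'=\{(0,1),(1,0)\}$); $\varphi=\{(0,1),(1,2),(2,0)\}$; $\varphi_0'=\{(1,2),(2,0)\}$, $\varphi_1'=\{(0,1),(2,0)\}$, $\varphi_2'=\{(0,1),(1,2)\}$, $\varphi_3'=\{(1,2),(0,0)\}$, $\varphi_4'=\{(0,2),(1,1)\}$, $\varphi_5'=\{(0,1),(2,2)\}$; $\tau_0=\{(0,0),(1,0),(2,1)\}$, $\tau_1=\{(0,1),(1,1),(2,0)\}$. *)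

From mathcomp Require Import all_boot.
Set Implicit Arguments. Unset Strict Implicit. Unset Printing Implicit Defensive.

Section Algebra.
Variables (T : Type) (I : Type) (ar : I -> nat)
          (ops : forall i, ('I_(ar i) -> T) -> T).

Inductive term_op (n : nat) : (('I_n -> T) -> T) -> Prop :=
| term_proj (j : 'I_n) : term_op (fun x => x j)
| term_comp (i : I) (g : 'I_(ar i) -> ('I_n -> T) -> T) :
    (forall k, term_op (g k)) -> term_op (fun x => ops (fun k => g k x)).

Definition t0 : 'I_3 := @Ordinal 3 0 isT.
Definition t1 : 'I_3 := @Ordinal 3 1 isT.
Definition t2 : 'I_3 := @Ordinal 3 2 isT.

(* Mal'cev algebra: a ternary term d with d(y,x,x) = d(x,x,y) = y *)
Definition malcev : Prop :=
  exists d : ('I_3 -> T) -> T, term_op d /\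
    forall x y : T,
      d [fun k : 'I_3 => x with t0 |-> y] = y /\
      d [fun k : 'I_3 => x with t2 |-> y] = y.
End Algebra.

Section OnThree.
Variables (I : Type) (ar : I -> nat)
          (ops : forall i, ('I_(ar i) -> 'I_3) -> 'I_3).

Definition rel3 := {set 'I_3 * 'I_3}.

Definition inv1 (U : {set 'I_3}) : Prop :=
  forall i (x : 'I_(ar i) -> 'I_3), (forall k, x k \in U) -> ops x \in U.
Definition inv2 (S : rel3) : Prop :=
  forall i (x y : 'I_(ar i) -> 'I_3), (forall k, (x k, y k) \in S) ->
    (ops x, ops y) \in S.

Definition diag3 : rel3 := [set p | p.1 == p.2].

Definition is_equiv (S : rel3) : Prop :=
  (forall a, (a, a) \in S) /\ (forall a b, (a, b) \in S -> (b, a) \in S) /\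
  (forall a b c, (a, b) \in S -> (b, c) \in S -> (a, c) \in S).

Definition congruence (S : rel3) : Prop := is_equiv S /\ inv2 S.

Definition is_monolith (mu : rel3) : Prop :=
  [/\ congruence mu, mu != diag3 &
      forall th, congruence th -> th != diag3 -> mu \subset th].
End OnThree.

Definition mu_ (i : 'I_3) : rel3 := [set p | (p.1 == i) == (p.2 == i)].
Definition rho_ (i : 'I_3) : rel3 := ~: mu_ i.
(* the transposition of {0,1,2} fixing i *)
Definition transp (i x : 'I_3) : 'I_3 :=
  if x == i then i else inord (3 - i - x).
Definition psi_ (i : 'I_3) : rel3 := [set p | p.2 == transp i p.1].
Definition psi'_ (i : 'I_3) : rel3 := [set p in psi_ i | p.1 != i].
Definition phi : rel3 := [set (t0, t1); (t1, t2); (t2, t0)].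
Definition phi'0 : rel3 := [set (t1, t2); (t2, t0)].
Definition phi'1 : rel3 := [set (t0, t1); (t2, t0)].
Definition phi'2 : rel3 := [set (t0, t1); (t1, t2)].
Definition phi'3 : rel3 := [set (t1, t2); (t0, t0)].
Definition phi'4 : rel3 := [set (t0, t2); (t1, t1)].
Definition phi'5 : rel3 := [set (t0, t1); (t2, t2)].
Definition tau0 : rel3 := [set (t0, t0); (t1, t0); (t2, t1)].
Definition tau1 : rel3 := [set (t0, t1); (t1, t1); (t2, t0)].
Definition full3 : rel3 := setT.

Inductive ppf : Type :=
| PEq of nat & nat
| P1 of {set 'I_3} & nat
| P2 of rel3 & nat & nat
| PAnd of ppf & ppf
| PEx of nat & ppf.

Fixpoint pp_sat (e : nat -> 'I_3) (f : ppf) : Prop :=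
  match f with
  | PEq x y => e x = e y
  | P1 U x => e x \in U
  | P2 Q x y => (e x, e y) \in Q
  | PAnd f g => pp_sat e f /\ pp_sat e g
  | PEx v f => exists c : 'I_3, pp_sat (fun w => if w == v then c else e w) f
  end.

Fixpoint pp_uses (G1 : {set 'I_3} -> Prop) (G2 : rel3 -> Prop) (f : ppf)
  : Prop :=
  match f with
  | PEq _ _ => True
  | P1 U _ => G1 U
  | P2 Q _ _ => G2 Q
  | PAnd f g => pp_uses G1 G2 f /\ pp_uses G1 G2 g
  | PEx _ f => pp_uses G1 G2 f
  end.

Definition pp_definable (G1 : {set 'I_3} -> Prop) (G2 : rel3 -> Prop)
  (R : rel3) : Prop :=
  exists f, pp_uses G1 G2 f /\ forall e, pp_sat e f <-> (e 0, e 1) \in R.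

From mathcomp Require Import all_boot all_fingroup.
From Stdlib Require Import FunctionalExtensionality Classical.
Set Implicit Arguments. Unset Strict Implicit. Unset Printing Implicit Defensive.

(* A Mal'cev term d makes every compatible binary relation R rectangular: from
   a R c, a R d and b R c, applying d to the pairs (b,c), (a,c), (a,d) gives
   d(b,a,a) R d(c,c,d), that is b R d.  On a three-element set the rest is
   finite combinatorics, decided by evaluation over all 512 binary relations.
   Such an R is a product of unary relations, a restricted diagonal, or the
   restriction to its domain and range of X or X^-1 for a listed relation X,
   where X is R or R^-1 when no mu_j is compatible (the kernels R o R^-1 and
   R^-1 o R are then not of the form mu_j), and one of R, mu_2,
   mu_2 o R o mu_2, mu_2 o R^-1, mu_2 o R when mu_2 is compatible; the only
   exceptions are psi_0 = phi o psi_2 and psi_1 = psi_2 o phi.  The same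
   evaluation classifies the compatible equivalences, which gives the monolith.
   Relabelling the universe by a transposition moves a compatible mu_j, or
   failing that a compatible psi_j, to index 2. *)

Section Compatible.
Variables (T I : Type) (ar : I -> nat) (ops : forall i, ('I_(ar i) -> T) -> T).

Definition compatible (r : rel T) : Prop :=
  forall i (x y : 'I_(ar i) -> T), (forall k, r (x k) (y k)) -> r (ops x) (ops y).

Lemma term_op_compatible r n (t : ('I_n -> T) -> T) :
  compatible r -> term_op ops t -> forall x y, (forall k, r (x k) (y k)) -> r (t x) (t y).
Proof.
move=> rC; elim=> [j | i g _ IHg] x y xy /=; first exact: xy.
by apply: rC => k; apply: IHg.
Qed.

Lemma malcev_rectangular r : malcev ops -> compatible r ->
  forall a b c d, r a c -> r a d -> r b c -> r b d.
Proof.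
move=> [t [tT tE]] rC a b c d ac ad bc.
have := term_op_compatible rC tT
  (x := [fun k => a with t0 |-> b]) (y := [fun k => c with t2 |-> d]).
by case: (tE a b) => -> _; case: (tE c d) => _ ->; apply; case=> [[|[|[|?]]] ?].
Qed.

End Compatible.

Section Transport.
Variables (B C I : Type) (ar : I -> nat) (ops : forall i, ('I_(ar i) -> B) -> B).
Variables (h : B -> C) (g : C -> B).
Hypotheses (hK : cancel h g) (gK : cancel g h).

Definition transport i (x : 'I_(ar i) -> C) : C := h (ops (fun k => g (x k))).

Lemma transport_morph i (x : 'I_(ar i) -> B) : h (ops x) = transport (fun k => h (x k)).
Proof.
by rewrite /transport; congr (h (ops _)); apply: functional_extensionality => k.
Qed.

Lemma compatible_transport (r : rel C) :
  compatible transport r <-> compatible ops (fun a b => r (h a) (h b)).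
Proof.
split=> rC i x y xy; first by rewrite !transport_morph; apply: rC.
by apply: rC => k; rewrite !gK.
Qed.

Lemma transport_rectangular (r : rel C) : malcev ops -> compatible transport r ->
  forall a b c d, r a c -> r a d -> r b c -> r b d.
Proof.
move=> M /compatible_transport rC a b c d.
by have := malcev_rectangular M rC (a := g a) (b := g b) (c := g c) (d := g d); rewrite !gK.
Qed.

End Transport.

Definition ord3s : seq 'I_3 := [:: t0; t1; t2].

Lemma mem_ord3s x : x \in ord3s.
Proof. by case: x => [[|[|[|?]]] ?]. Qed.

Definition set_of_rel (f : rel 'I_3) : rel3 := [set p | f p.1 p.2].
Definition rel_of_set (R : rel3) : rel 'I_3 := fun x y => (x, y) \in R.

Lemma rel_of_setK R : set_of_rel (rel_of_set R) = R.
Proof. by apply/setP => -[x y]; rewrite inE. Qed.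

Definition fullr : rel 'I_3 := fun _ _ => true.
Definition rel_conv (f : rel 'I_3) : rel 'I_3 := fun x y => f y x.
Definition rdom (f : rel 'I_3) : pred 'I_3 := fun x => has (f x) ord3s.
Definition rran (f : rel 'I_3) : pred 'I_3 := rdom (rel_conv f).

Definition rel_of_bits (s : seq bool) : rel 'I_3 := fun x y => nth false s (3 * x + y).
Definition tabulate (f : rel 'I_3) : rel 'I_3 :=
  rel_of_bits [seq f x y | x <- ord3s, y <- ord3s].

Lemma tabulateE f x y : tabulate f x y = f x y.
Proof. by case: x y => [[|[|[|?]]] ?] // [[|[|[|?]]] ?] //=; congr f; apply: val_inj. Qed.

(* Tabulated so that [vm_compute] evaluates nested compositions only once. *)
Definition rel_comp (f g : rel 'I_3) : rel 'I_3 :=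
  tabulate (fun x y => has (fun z => f x z && g z y) ord3s).

Lemma rel_compP (f g : rel 'I_3) x y :
  reflect (exists2 z, f x z & g z y) (rel_comp f g x y).
Proof.
rewrite /rel_comp tabulateE.
apply: (iffP hasP) => [[z _ /andP[]] | [z xz zy]]; first by exists z.
by exists z; rewrite ?mem_ord3s ?xz.
Qed.

Definition rel_eqb (f g : rel 'I_3) : bool :=
  all (fun x => all (fun y => f x y == g x y) ord3s) ord3s.

Lemma rel_eqbP (f g : rel 'I_3) : reflect (f = g) (rel_eqb f g).
Proof.
apply: (iffP allP) => [fg | -> x _]; last by apply/allP => y _.
apply: functional_extensionality => x; apply: functional_extensionality => y.
exact/eqP/(allP (fg x (mem_ord3s x)) y (mem_ord3s y)).
Qed.

Definition rectangular (f : rel 'I_3) : bool :=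
  all (fun a => all (fun b => all (fun c => all (fun d =>
    [&& f a c, f a d & f b c] ==> f b d) ord3s) ord3s) ord3s) ord3s.

Lemma rectangularP (f : rel 'I_3) :
  reflect (forall a b c d, f a c -> f a d -> f b c -> f b d) (rectangular f).
Proof.
apply: (iffP idP) => [/allP fR a b c d ac ad bc | fR].
  have /allP/(_ b (mem_ord3s b))/allP/(_ c (mem_ord3s c))/allP/(_ d (mem_ord3s d)) :=
    fR a (mem_ord3s a).
  by rewrite ac ad bc.
apply/allP => a _; apply/allP => b _; apply/allP => c _; apply/allP => d _.
by apply/implyP => /and3P[]; apply: fR.
Qed.

Definition equivb (f : rel 'I_3) : bool :=
  [&& all (fun a => f a a) ord3s,
      all (fun a => all (fun b => f a b ==> f b a) ord3s) ord3s &
      all (fun a => all (fun b => all (fun c =>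
        [&& f a b & f b c] ==> f a c) ord3s) ord3s) ord3s].

Lemma equivb_rel_of_set R : is_equiv R -> equivb (rel_of_set R).
Proof.
case=> refl [sym trans]; apply/and3P; split.
- by apply/allP => a _; apply: refl.
- by apply/allP => a _; apply/allP => b _; apply/implyP; apply: sym.
- apply/allP => a _; apply/allP => b _; apply/allP => c _.
  by apply/implyP => /andP[]; apply: trans.
Qed.

Fixpoint bitseqs n : seq (seq bool) :=
  if n is n'.+1 then [seq b :: s | b <- [:: true; false], s <- bitseqs n'] else [:: [::]].

Lemma mem_bitseqs s : s \in bitseqs (size s).
Proof.
elim: s => [|b s IH] //=; rewrite cats0 mem_cat.
by case: b; [rewrite map_f | rewrite orbC map_f].
Qed.

Lemma rel3_enum_implies (P Q : rel 'I_3 -> bool) :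
  all (fun s => P (rel_of_bits s) ==> Q (rel_of_bits s)) (bitseqs 9) ->
  forall f, P f -> Q f.
Proof.
move=> /allP PQ f; have -> : f = tabulate f.
  by apply/rel_eqbP/allP => x _; apply/allP => y _; rewrite tabulateE.
exact/implyP/PQ/mem_bitseqs.
Qed.

Definition mub (i : 'I_3) : rel 'I_3 := fun x y => (x == i) == (y == i).

(* [psi_ i] in a form [vm_compute] can evaluate: [transp] goes through [inord],
   whose opaque proofs block evaluation. *)
Definition psib (i : 'I_3) : rel 'I_3 :=
  fun x y => if x == i then y == i else (y != i) && (y != x).

Definition psi'b (i : 'I_3) : rel 'I_3 := fun x y => psib i x y && (x != i).
Definition pairs_rel (s : seq ('I_3 * 'I_3)) : rel 'I_3 := fun x y => (x, y) \in s.
Definition phib : rel 'I_3 := pairs_rel [:: (t0, t1); (t1, t2); (t2, t0)].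

Lemma psibE i x y : psib i x y = (y == transp i x).
Proof.
rewrite /psib /transp.
by case: i x y => [[|[|[|?]]] ?] // [[|[|[|?]]] ?] // [[|[|[|?]]] ?];
  rewrite -!val_eqE /= ?inordK.
Qed.

Definition basis_simple : seq rel3 :=
  [:: phi; psi_ t2; psi'_ t0; psi'_ t1; psi'_ t2; phi'0; phi'1; phi'2; phi'3; phi'4; phi'5].
Definition basisb_simple : seq (rel 'I_3) :=
  [:: phib; psib t2; psi'b t0; psi'b t1; psi'b t2;
      pairs_rel [:: (t1, t2); (t2, t0)]; pairs_rel [:: (t0, t1); (t2, t0)];
      pairs_rel [:: (t0, t1); (t1, t2)]; pairs_rel [:: (t1, t2); (t0, t0)];
      pairs_rel [:: (t0, t2); (t1, t1)]; pairs_rel [:: (t0, t1); (t2, t2)]].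

Definition basis_mu2 : seq rel3 := [:: mu_ t2; rho_ t2; tau0; tau1; psi_ t2; psi'_ t2].
Definition basisb_mu2 : seq (rel 'I_3) :=
  [:: mub t2; fun x y => ~~ mub t2 x y; pairs_rel [:: (t0, t0); (t1, t0); (t2, t1)];
      pairs_rel [:: (t0, t1); (t1, t1); (t2, t0)]; psib t2; psi'b t2].

Lemma map_set_of_rel_basis_simple : map set_of_rel basisb_simple = basis_simple.
Proof.
by do !congr (_ :: _); apply/setP => -[x y];
  rewrite !inE /phib /pairs_rel /psi'b /= ?psibE ?inE ?orbA.
Qed.

Lemma map_set_of_rel_basis_mu2 : map set_of_rel basisb_mu2 = basis_mu2.
Proof.
by do !congr (_ :: _); apply/setP => -[x y];
  rewrite !inE /pairs_rel /psi'b /= ?psibE ?inE ?orbA.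
Qed.

Definition restricts (X f : rel 'I_3) : bool :=
  rel_eqb f (fun x y => [&& X x y, rdom f x & rran f y]).
Definition prod_or_diag (f : rel 'I_3) : bool := restricts fullr f || restricts eq_op f.
Definition restricts_named (basisb : seq (rel 'I_3)) (X f : rel 'I_3) : bool :=
  has (rel_eqb X) basisb && (restricts X f || restricts (rel_conv X) f).
Definition is_mu (f : rel 'I_3) : bool := has (fun l => rel_eqb f (mub l)) ord3s.

Lemma rectangular_simple_classification : forall f,
  [&& rectangular f, ~~ is_mu (rel_comp f (rel_conv f))
    & ~~ is_mu (rel_comp (rel_conv f) f)] ->
  [|| prod_or_diag f, restricts_named basisb_simple f f,
      restricts_named basisb_simple (rel_conv f) f
    | rel_eqb f (psib t0) || rel_eqb f (psib t1)].
Proof. by apply: rel3_enum_implies; vm_compute. Qed.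

Lemma rectangular_mu2_classification : forall f,
  [&& rectangular f, rectangular (rel_comp (rel_comp f (rel_conv f)) (mub t2)),
      rectangular (rel_comp (rel_comp (rel_conv f) f) (mub t2))
    & rectangular (rel_comp (rel_comp (rel_comp (rel_conv f) (mub t2)) f) (mub t2))] ->
  [|| prod_or_diag f, restricts_named basisb_mu2 f f,
      restricts_named basisb_mu2 (mub t2) f,
      restricts_named basisb_mu2 (rel_comp (rel_comp (mub t2) f) (mub t2)) f,
      restricts_named basisb_mu2 (rel_comp (mub t2) (rel_conv f)) f
    | restricts_named basisb_mu2 (rel_comp (mub t2) f) f].
Proof. by apply: rel3_enum_implies; vm_compute. Qed.

Lemma equiv_not_mu_full : forall g,
  [&& equivb g, ~~ rel_eqb g eq_op & ~~ is_mu g] -> rel_eqb g fullr.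
Proof. by apply: rel3_enum_implies; vm_compute. Qed.

Lemma equiv_above_mu2 : forall g,
  [&& equivb g, ~~ rel_eqb g eq_op & rectangular (rel_comp g (mub t2))] ->
  rel_eqb g (mub t2) || rel_eqb g fullr.
Proof. by apply: rel3_enum_implies; vm_compute. Qed.

Section PPDefinable.
Variables (G1 : {set 'I_3} -> Prop) (G2 : rel3 -> Prop).

Lemma pp_definable_fullr : pp_definable G1 G2 (set_of_rel fullr).
Proof. by exists (PEq 0 0); split=> // e; rewrite inE. Qed.

Lemma pp_definable_eq : pp_definable G1 G2 (set_of_rel eq_op).
Proof. by exists (PEq 0 1); split=> // e; rewrite inE; split=> /eqP. Qed.

Lemma pp_definable_atom X : G2 (set_of_rel X) -> pp_definable G1 G2 (set_of_rel X).
Proof. by move=> XG; exists (P2 (set_of_rel X) 0 1). Qed.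

Lemma pp_definable_atom_conv X :
  G2 (set_of_rel X) -> pp_definable G1 G2 (set_of_rel (rel_conv X)).
Proof. by move=> XG; exists (P2 (set_of_rel X) 1 0); split=> // e /=; rewrite !inE. Qed.

Lemma pp_definable_atom_comp X Y : G2 (set_of_rel X) -> G2 (set_of_rel Y) ->
  pp_definable G1 G2 (set_of_rel (rel_comp X Y)).
Proof.
move=> XG YG; exists (PEx 2 (PAnd (P2 (set_of_rel X) 0 2) (P2 (set_of_rel Y) 2 1))).
split=> // e /=; rewrite !inE /=.
split=> [[z] | /rel_compP[z xz zy]]; last by exists z; rewrite !inE xz.
by rewrite !inE => -[xz zy]; apply/rel_compP; exists z.
Qed.

Lemma pp_definable_restrict X u v : pp_definable G1 G2 (set_of_rel X) ->
  G1 [set x | u x] -> G1 [set y | v y] ->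
  pp_definable G1 G2 (set_of_rel (fun x y => [&& X x y, u x & v y])).
Proof.
move=> [F [FG FE]] uG vG.
exists (PAnd F (PAnd (P1 [set x | u x] 0) (P1 [set y | v y] 1))); split=> // e /=.
by rewrite FE !inE /=; split=> [[-> [-> ->]] | /and3P[-> -> ->]].
Qed.

End PPDefinable.

Definition pp_definable_from I (ar : I -> nat)
  (ops : forall i, ('I_(ar i) -> 'I_3) -> 'I_3) (basis : seq rel3) (R : rel3) : Prop :=
  pp_definable (inv1 ops) (fun Q => Q \in basis /\ inv2 ops Q) R.

Section ThreeElementAlgebra.
Variables (I : Type) (ar : I -> nat) (ops : forall i, ('I_(ar i) -> 'I_3) -> 'I_3).

Lemma inv2_set_of_rel (f : rel 'I_3) : inv2 ops (set_of_rel f) <-> compatible ops f.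
Proof.
split=> fC i x y xy; last by rewrite inE; apply: fC => k; move: (xy k); rewrite inE.
by have := fC i x y; rewrite inE; apply=> k; rewrite inE; apply: xy.
Qed.

Lemma compatible_conv (f : rel 'I_3) : compatible ops f -> compatible ops (rel_conv f).
Proof. by move=> fC i x y xy; apply: fC. Qed.

Lemma compatible_comp (f g : rel 'I_3) :
  compatible ops f -> compatible ops g -> compatible ops (rel_comp f g).
Proof.
move=> fC gC i x y xy.
have /fin_all_exists2[z xz zy] k : exists2 z, f (x k) z & g z (y k) by apply/rel_compP.
by apply/rel_compP; exists (ops z); [apply: fC | apply: gC].
Qed.

Lemma inv1_rdom (f : rel 'I_3) : compatible ops f -> inv1 ops [set x | rdom f x].
Proof.
move=> fC i x xD; rewrite inE.
have /fin_all_exists[y xy] k : exists y, f (x k) y.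
  by move: (xD k); rewrite inE => /hasP[y _]; exists y.
by apply/hasP; exists (ops y); [exact: mem_ord3s | apply: fC].
Qed.

Lemma inv1_rran (f : rel 'I_3) : compatible ops f -> inv1 ops [set y | rran f y].
Proof. by move/compatible_conv; apply: inv1_rdom. Qed.

Lemma compatible_not_mu (f : rel 'I_3) :
  (forall l, ~ compatible ops (mub l)) -> compatible ops f -> ~~ is_mu f.
Proof.
by move=> nomu fC; apply/hasP => -[l _ /rel_eqbP fE]; apply: (nomu l); rewrite -fE.
Qed.

Lemma rel_of_set_neq_diag (R : rel3) : R != diag3 -> ~~ rel_eqb (rel_of_set R) eq_op.
Proof. by apply: contra => /rel_eqbP RE; rewrite -[R]rel_of_setK RE. Qed.

Section Basis.
Variables (basis : seq rel3) (basisb : seq (rel 'I_3)).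
Hypothesis basisE : map set_of_rel basisb = basis.

Lemma basis_named (X : rel 'I_3) : compatible ops X -> has (rel_eqb X) basisb ->
  set_of_rel X \in basis /\ inv2 ops (set_of_rel X).
Proof.
move=> XC XB; split; last exact/inv2_set_of_rel.
rewrite -basisE; elim: basisb XB => //= Y b IH; rewrite inE.
by case/orP=> [/rel_eqbP -> | /IH ->]; rewrite ?eqxx ?orbT.
Qed.

Lemma pp_definable_restricts (X f : rel 'I_3) :
  pp_definable_from ops basis (set_of_rel X) -> compatible ops f -> restricts X f ->
  pp_definable_from ops basis (set_of_rel f).
Proof.
move=> XD fC /rel_eqbP {1}->.
by apply: pp_definable_restrict XD _ _; [apply: inv1_rdom | apply: inv1_rran].
Qed.

Lemma pp_definable_prod_or_diag (f : rel 'I_3) : compatible ops f -> prod_or_diag f ->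
  pp_definable_from ops basis (set_of_rel f).
Proof.
move=> fC /orP[] /(pp_definable_restricts _ fC); apply.
  exact: pp_definable_fullr.
exact: pp_definable_eq.
Qed.

Lemma pp_definable_restricts_named (X f : rel 'I_3) :
  compatible ops X -> compatible ops f -> restricts_named basisb X f ->
  pp_definable_from ops basis (set_of_rel f).
Proof.
move=> XC fC /andP[XB /orP[] /(pp_definable_restricts _ fC)]; apply.
  exact/pp_definable_atom/basis_named.
exact/pp_definable_atom_conv/basis_named.
Qed.

Lemma pp_definable_named_comp (X Y : rel 'I_3) : compatible ops X -> compatible ops Y ->
  has (rel_eqb X) basisb -> has (rel_eqb Y) basisb ->
  pp_definable_from ops basis (set_of_rel (rel_comp X Y)).
Proof. by move=> XC YC XB YB; apply: pp_definable_atom_comp; apply: basis_named. Qed.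

End Basis.

Hypothesis rect : forall f, compatible ops f -> rectangular f.

Lemma monolith_full : (forall l, ~ compatible ops (mub l)) -> is_monolith ops full3.
Proof.
move=> nomu; split.
- split; last by move=> i x y _; rewrite inE.
  by split; [|split] => *; rewrite inE.
- by apply/eqP => /setP/(_ (t0, t1)); rewrite !inE.
- move=> th [thE thC] thD; have thC' : compatible ops (rel_of_set th) := thC.
  have /rel_eqbP thF : rel_eqb (rel_of_set th) fullr.
    apply: equiv_not_mu_full.
    by rewrite equivb_rel_of_set // rel_of_set_neq_diag // compatible_not_mu.
  by apply/subsetP => -[x y] _; rewrite -[th]rel_of_setK thF inE.
Qed.

Lemma monolith_mu2 : compatible ops (mub t2) -> is_monolith ops (mu_ t2).
Proof.
move=> muC; split.
- split; last exact/(inv2_set_of_rel (mub t2)).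
  split; [|split] => [a | a b | a b c]; rewrite !inE /=; first exact: eqxx.
    by rewrite eq_sym.
  by move=> /eqP-> /eqP->.
- by apply/eqP => /setP/(_ (t0, t1)); rewrite !inE.
- move=> th [thE thC] thD; have thC' : compatible ops (rel_of_set th) := thC.
  have : rel_eqb (rel_of_set th) (mub t2) || rel_eqb (rel_of_set th) fullr.
    apply: equiv_above_mu2.
    by rewrite equivb_rel_of_set // rel_of_set_neq_diag // rect //; exact: compatible_comp.
  by case/orP=> /rel_eqbP thE';
    apply/subsetP => -[x y]; rewrite -[th]rel_of_setK thE' !inE.
Qed.

Lemma pp_definable_mu2 (f : rel 'I_3) : compatible ops (mub t2) -> compatible ops f ->
  pp_definable_from ops basis_mu2 (set_of_rel f).
Proof.
move=> muC fC; have fTC := compatible_conv fC.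
have := @rectangular_mu2_classification f; rewrite !rect //.
2-4: by repeat apply: compatible_comp.
move/(_ isT); case/orP=> [|/orP[|/orP[|/orP[|/orP[]]]]] cert.
  exact: pp_definable_prod_or_diag.
all: apply: (pp_definable_restricts_named map_set_of_rel_basis_mu2 _ fC cert).
all: by repeat apply: compatible_comp.
Qed.

Lemma pp_definable_simple (f : rel 'I_3) : (forall l, ~ compatible ops (mub l)) ->
  (compatible ops (psib t0) \/ compatible ops (psib t1) -> compatible ops (psib t2)) ->
  compatible ops f -> pp_definable_from ops basis_simple (set_of_rel f).
Proof.
move=> nomu psiC fC; have fTC := compatible_conv fC.
have := @rectangular_simple_classification f; rewrite rect // !compatible_not_mu //.
2-3: exact: compatible_comp.
have basisE := map_set_of_rel_basis_simple.
move/(_ isT); case/or4P=> [| | |/orP[] /rel_eqbP fE].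
- exact: pp_definable_prod_or_diag.
- exact: (pp_definable_restricts_named basisE fC fC).
- exact: (pp_definable_restricts_named basisE fTC fC).
- have psi2C : compatible ops (psib t2) by apply: psiC; left; rewrite -fE.
  have phiC : compatible ops phib.
    rewrite (_ : phib = rel_comp (psib t0) (psib t2)); last by apply/rel_eqbP; vm_compute.
    by apply: compatible_comp; rewrite -?fE.
  rewrite fE (_ : psib t0 = rel_comp phib (psib t2)); last by apply/rel_eqbP; vm_compute.
  by apply: (pp_definable_named_comp basisE) => //; vm_compute.
- have psi2C : compatible ops (psib t2) by apply: psiC; right; rewrite -fE.
  have phiC : compatible ops phib.
    rewrite (_ : phib = rel_comp (psib t2) (psib t1)); last by apply/rel_eqbP; vm_compute.
    by apply: compatible_comp; rewrite -?fE.
  rewrite fE (_ : psib t1 = rel_comp (psib t2) phib); last by apply/rel_eqbP; vm_compute.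
  by apply: (pp_definable_named_comp basisE) => //; vm_compute.
Qed.

End ThreeElementAlgebra.

Lemma mub_relabel (p : 'I_3 -> 'I_3) (pK : involutive p) l :
  (fun x y => mub l (p x) (p y)) = mub (p l).
Proof.
apply: functional_extensionality => x; apply: functional_extensionality => y.
by rewrite /mub !(inv_eq pK).
Qed.

Lemma psib_relabel (p : 'I_3 -> 'I_3) (pK : involutive p) l :
  (fun x y => psib l (p x) (p y)) = psib (p l).
Proof.
apply: functional_extensionality => x; apply: functional_extensionality => y.
by rewrite /psib !(inv_eq pK) pK.
Qed.

Definition normal_labelling I (ar : I -> nat)
  (ops : forall i, ('I_(ar i) -> 'I_3) -> 'I_3) : Prop :=
  compatible ops (mub t2) \/
  (forall l, ~ compatible ops (mub l)) /\
  (compatible ops (psib t0) \/ compatible ops (psib t1) -> compatible ops (psib t2)).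

Lemma exists_normal_labelling I (ar : I -> nat)
  (ops : forall i, ('I_(ar i) -> 'I_3) -> 'I_3) :
  exists2 p : 'I_3 -> 'I_3, involutive p & normal_labelling (transport ops p p).
Proof.
have relabelE p (pK : involutive p) f :
    compatible (transport ops p p) f <-> compatible ops (fun x y => f (p x) (p y)).
  exact: compatible_transport.
have no_mu p (pK : involutive p) : ~ (exists l, compatible ops (mub l)) ->
    forall l, ~ compatible (transport ops p p) (mub l).
  move=> nomu l /(relabelE p pK); rewrite (mub_relabel pK) => muC.
  by apply: nomu; exists (p l).
case: (classic (exists l, compatible ops (mub l))) => [[l muC] | nomu].
  have pK := tpermK l t2; exists (tperm l t2) => //; left.
  by apply/(relabelE _ pK); rewrite (mub_relabel pK) tpermR.
case: (classic (exists l, compatible ops (psib l))) => [[l psiC] | nopsi].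
  have pK := tpermK l t2; exists (tperm l t2) => //; right; split; first exact: no_mu.
  by move=> _; apply/(relabelE _ pK); rewrite (psib_relabel pK) tpermR.
exists id => //; right; split; first exact: no_mu.
by case=> psiC; case: nopsi; [exists t0 | exists t1].
Qed.

Theorem lemma4p4 (B : finType) (I : Type) (ar : I -> nat)
  (opsB : forall i, ('I_(ar i) -> B) -> B) :
  #|B| = 3 -> malcev opsB ->
  exists (opsA : forall i, ('I_(ar i) -> 'I_3) -> 'I_3) (h : B -> 'I_3),
    bijective h /\
    (forall i (x : 'I_(ar i) -> B), h (opsB i x) = opsA i (fun k => h (x k))) /\
    ((is_monolith opsA full3 /\
      forall R : rel3, inv2 opsA R ->
        pp_definable (inv1 opsA)
          (fun Q => Q \in [:: phi; psi_ t2; psi'_ t0; psi'_ t1; psi'_ t2;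
                             phi'0; phi'1; phi'2; phi'3; phi'4; phi'5]
                    /\ inv2 opsA Q) R)
     \/
     (is_monolith opsA (mu_ t2) /\
      forall R : rel3, inv2 opsA R ->
        pp_definable (inv1 opsA)
          (fun Q => Q \in [:: mu_ t2; rho_ t2; tau0; tau1; psi_ t2; psi'_ t2]
                    /\ inv2 opsA Q) R)).
Proof.
move=> cardB malcevB.
pose h (b : B) : 'I_3 := cast_ord cardB (enum_rank b).
pose g (i : 'I_3) : B := enum_val (cast_ord (esym cardB) i).
have hK : cancel h g by move=> b; rewrite /h /g cast_ordK enum_rankK.
have gK : cancel g h by move=> i; rewrite /h /g enum_valK cast_ordKV.
have [p pK normal] := exists_normal_labelling (transport opsB h g).
have phK : cancel (p \o h) (g \o p) by move=> b /=; rewrite pK hK.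
have gpK : cancel (g \o p) (p \o h) by move=> i /=; rewrite gK pK.
exists (transport (transport opsB h g) p p), (p \o h).
split; first exact: Bijective phK gpK.
split; first by move=> i x; rewrite /= (transport_morph _ hK) (transport_morph _ pK).
have rect f : compatible (transport (transport opsB h g) p p) f -> rectangular f.
  move=> fC; apply/rectangularP => a b c d.
  exact: (transport_rectangular phK gpK malcevB fC).
case: normal => [muC | [nomu psiC]]; [right | left]; split.
- exact: monolith_mu2.
- by move=> R RC; rewrite -[R]rel_of_setK; apply: pp_definable_mu2.
- exact: monolith_full.
- by move=> R RC; rewrite -[R]rel_of_setK; apply: pp_definable_simple.
Qed.
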